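(* In both the single-hop and the multihop version of Peg Duotaire, for all words $x,y\in\{0,1\}^*$ and every integer $m\ge 0$, the position $x\,0(01)^m00\,y$ is equivalent to the disjunctive sum of the positions $x0$ and $0y$ (the two parts can never interact); in particular \[ G\bigl(x\,0(01)^m00\,y\bigr) = G(x0)\oplus G(0y). \]
   Context: Peg Duotaire is an impartial two-player game played on the infinite line of sites indexed by $\mathbb{Z}$, each site holding a peg or being a hole, with finitely many pegs. A word $w\in\{0,1\}^*$ denotes the position in which $w$ is written on consecutive sites ($1$ = peg, $0$ = hole) and all other sites are holes. A hop: for a peg at site $i$, a peg at site $i+d$ and a hole at site $i+2d$ ($d=\pm1$), move the peg from $i$ to $i+2d$ and remove the peg at $i+d$. In the single-hop version, a move is a single hop; in the multihop version, a move is a sequence of one or more hops all performed by the same peg. Players alternate moves; a player unable to move loses. $G(w)$ denotes the nim-value (Grundy number) of the position $w$: the least nonnegative integer not among the nim-values of positions reachable in one move. $\oplus$ is bitwise exclusive-or of nonnegative integers (nim-sum); the nim-value of a disjunctive sum of games is the nim-sum of their nim-values. *)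

From mathcomp Require Import all_boot all_order all_algebra.
From Stdlib Require PeanoNat.
Set Implicit Arguments. Unset Strict Implicit. Unset Printing Implicit Defensive.
Import Order.TTheory GRing.Theory Num.Theory.
Local Open Scope ring_scope.

(* A position is the (finite) set of sites holding a peg, given as a list
   of integers (membership is what matters). *)
Definition position := seq int.

(* The word w written on sites 0, 1, ..., size w - 1 (true = peg). *)
Definition of_word (w : seq bool) : position :=
  [seq (i%:Z) | i <- iota 0 (size w) & nth false w i].

Definition hop (s : position) (a d : int) : option (int * position) :=
  if [&& a \in s, (a + d) \in s & (a + d *+ 2) \notin s]
  then Some (a + d *+ 2, (a + d *+ 2) :: [seq b <- s | (b != a) && (b != a + d)])
  else None.

Definition hops_from (s : position) (a : int) : seq (int * position) :=
  pmap (hop s a) [:: 1; -1].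

(* All positions reachable by a sequence of one or more hops all performed by
   the peg that starts at site a (fuel bounds the number of hops; each hop
   removes a peg, so fuel = number of pegs suffices). *)
Fixpoint multi_from (fuel : nat) (s : position) (a : int) : seq position :=
  match fuel with
  | O => [::]
  | fuel'.+1 =>
      flatten [seq p.2 :: multi_from fuel' p.2 p.1 | p <- hops_from s a]
  end.

(* Options of a position: single-hop version (multi = false) or multihop
   version (multi = true). *)
Definition moves (multi : bool) (s : position) : seq position :=
  if multi then flatten [seq multi_from (size s) s a | a <- undup s]
  else flatten [seq [seq p.2 | p <- hops_from s a] | a <- undup s].

Definition mex (l : seq nat) : nat :=
  find (fun k => k \notin l) (iota 0 (size l).+1).

(* Grundy values, by recursion on a fuel (every move decreases the number of
   pegs, so fuel = size s + 1 is enough). *)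
Fixpoint grundy_n (multi : bool) (n : nat) (s : position) : nat :=
  match n with
  | O => 0%N
  | n'.+1 => mex [seq grundy_n multi n' t | t <- moves multi s]
  end.

Definition G (multi : bool) (s : position) : nat := grundy_n multi (size s).+1 s.

Fixpoint grundy_sum_n (multi : bool) (n : nat) (s1 s2 : position) : nat :=
  match n with
  | O => 0%N
  | n'.+1 =>
      mex ([seq grundy_sum_n multi n' t s2 | t <- moves multi s1] ++
           [seq grundy_sum_n multi n' s1 t | t <- moves multi s2])
  end.

Definition G_sum (multi : bool) (s1 s2 : position) : nat :=
  grundy_sum_n multi (size s1 + size s2).+1 s1 s2.

Definition nimsum (a b : nat) : nat := PeanoNat.Nat.lxor a b.

Definition split_word (x y : seq bool) (m : nat) : seq bool :=
  x ++ [:: false] ++ flatten (nseq m [:: false; true]) ++ [:: false; false] ++ y.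

From mathcomp Require Import all_boot all_order all_algebra zify.
From Stdlib Require Import PeanoNat Lia.
Set Implicit Arguments. Unset Strict Implicit. Unset Printing Implicit Defensive.
Import Order.TTheory GRing.Theory Num.Theory.

(* A peg of the left part
   [x0] can never reach the hole just right of it: with Fibonacci weights
   [fib (D - k)] for a peg at distance [k] from that hole, hops towards it
   preserve the total weight and hops away lower it, while the initial pegs,
   at distinct distances [>= 2], weigh less than [fib D], the weight of one
   peg on the hole.  The right part is the mirror image, and the pegs of
   [(01)^m] are isolated and stay put.  So every move is a move of exactly
   one part, and the Grundy value is that of the disjunctive sum, i.e. the
   nim-sum of the Grundy values of the parts. *)

Lemma lt_testbit_top (k x y : nat) :
  (forall j, (k < j)%N -> Nat.testbit x j = Nat.testbit y j) ->
  Nat.testbit x k = false -> Nat.testbit y k = true -> (x < y)%N.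
Proof.
elim: k x y => [|k IH] x y Hhigh Hx Hy;
  have := Nat.div2_odd x; have := Nat.div2_odd y.
- have Hdiv2 : Nat.div2 x = Nat.div2 y.
    by apply: Nat.bits_inj => j; rewrite !Nat.testbit_div2; apply: Hhigh.
  rewrite -!Nat.bit0_odd Hx Hy /= Hdiv2; lia.
- have : (Nat.div2 x < Nat.div2 y)%N.
    apply: IH; rewrite ?Nat.testbit_div2 // => j Hj.
    by rewrite !Nat.testbit_div2; apply: Hhigh.
  case: (Nat.odd x); case: (Nat.odd y) => /=; lia.
Qed.

Lemma lxor_lt_self (g u : nat) :
  u <> 0%N -> Nat.testbit g (Nat.log2 u) = true -> (Nat.lxor g u < g)%N.
Proof.
move=> u0 Hg; apply: (@lt_testbit_top (Nat.log2 u)) => //.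
- move=> j /ssrnat.ltP Hj.
  by rewrite Nat.lxor_spec (Nat.bits_above_log2 u j Hj) Bool.xorb_false_r.
- by rewrite Nat.lxor_spec Hg Nat.bit_log2.
Qed.

(* [w] agrees with [lxor g1 g2] above the top bit of [u] and is smaller, so
   that bit is set in [lxor g1 g2], hence in [g1] or in [g2]; flipping the
   bits of [u] there lowers that number. *)
Lemma lt_lxor_cases (g1 g2 w : nat) : (w < Nat.lxor g1 g2)%N ->
  let u := Nat.lxor w (Nat.lxor g1 g2) in
  (Nat.lxor g1 u < g1)%N \/ (Nat.lxor g2 u < g2)%N.
Proof.
set v := Nat.lxor g1 g2 => Hwv u.
have u0 : u <> 0%N by move=> /Nat.lxor_eq_0_iff Ewv; lia.
set k := Nat.log2 u.
have Hvk : Nat.testbit v k = true.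
  apply: contraFT (ltn_geF Hwv) => /negbTE Hv; apply: ltnW.
  apply: (@lt_testbit_top k) => //.
  - move=> j /ssrnat.ltP /(Nat.bits_above_log2 u j).
    by rewrite Nat.lxor_spec; do 2 case: (Nat.testbit _ _).
  - by move: (Nat.bit_log2 u u0); rewrite Nat.lxor_spec Hv; case: (Nat.testbit _ _).
move: Hvk; rewrite /v Nat.lxor_spec.
case Hg1: (Nat.testbit g1 k) => /= Hg2; [left | right]; exact: lxor_lt_self.
Qed.

Lemma lxor_cancel_r (a b c : nat) : Nat.lxor a c = Nat.lxor b c -> a = b.
Proof.
move=> /(f_equal (Nat.lxor^~ c)).
by rewrite !Nat.lxor_assoc Nat.lxor_nilpotent !Nat.lxor_0_r.
Qed.

Lemma mex_notin (l : seq nat) : mex l \notin l.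
Proof.
rewrite /mex.
have Hhas : has (fun k => k \notin l) (iota 0 (size l).+1).
  apply/negPn/negP; rewrite -all_predC => /allP Hall.
  have Hsub : {subset iota 0 (size l).+1 <= l} by move=> k /Hall /negPn.
  by have := uniq_leq_size (iota_uniq 0 (size l).+1) Hsub; rewrite size_iota ltnn.
have := nth_find 0 Hhas.
by move: (Hhas); rewrite has_find size_iota => Hlt; rewrite nth_iota ?add0n.
Qed.

Lemma mem_below_mex (l : seq nat) k : (k < mex l)%N -> k \in l.
Proof.
rewrite /mex => Hk.
have Hsz : (find (fun k => k \notin l) (iota 0 (size l).+1) <= (size l).+1)%N.
  by have := find_size (fun k => k \notin l) (iota 0 (size l).+1); rewrite size_iota.
have := before_find 0 Hk.
by rewrite nth_iota ?add0n ?(leq_trans Hk Hsz) // => /negbFE.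
Qed.

Lemma mex_unique (l : seq nat) v :
  v \notin l -> (forall k, (k < v)%N -> k \in l) -> mex l = v.
Proof.
move=> Hv Hbelow; case: (ltngtP (mex l) v) => // Hlt.
- by have := mex_notin l; rewrite Hbelow.
- by move: Hv; rewrite mem_below_mex.
Qed.

Lemma eq_mex (l1 l2 : seq nat) : l1 =i l2 -> mex l1 = mex l2.
Proof.
move=> E; apply: mex_unique; first by rewrite E mex_notin.
by move=> k Hk; rewrite E; apply: mem_below_mex.
Qed.

Lemma mex_lxor (A B : seq nat) :
  mex ([seq Nat.lxor x (mex B) | x <- A] ++ [seq Nat.lxor (mex A) y | y <- B])
  = Nat.lxor (mex A) (mex B).
Proof.
set a := mex A; set b := mex B.
have lxor_bits w : Nat.lxor (Nat.lxor a (Nat.lxor w (Nat.lxor a b))) b = w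
                /\ Nat.lxor a (Nat.lxor b (Nat.lxor w (Nat.lxor a b))) = w.
  by split; apply: Nat.bits_inj => n; rewrite !Nat.lxor_spec;
    case: (Nat.testbit a n); case: (Nat.testbit b n); case: (Nat.testbit w n).
apply: mex_unique.
- rewrite mem_cat; apply/negP => /orP [] /mapP [x Hx].
  + by move/lxor_cancel_r => Exa; move: (mex_notin A); rewrite -/a Exa Hx.
  + rewrite Nat.lxor_comm (Nat.lxor_comm a) => /lxor_cancel_r Exb.
    by move: (mex_notin B); rewrite -/b Exb Hx.
- move=> w Hw; have [Hw1 Hw2] := lxor_bits w; rewrite mem_cat; apply/orP.
  case: (lt_lxor_cases Hw) => /mem_below_mex Hx; [left | right];
    by apply/mapP; eexists; first exact: Hx.
Qed.

Fixpoint fib (n : nat) : nat :=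
  match n with
  | 0 => 0
  | 1 => 1
  | (k.+1 as m).+1 => fib m + fib k
  end.

Lemma fibSS n : fib n.+2 = fib n.+1 + fib n.
Proof. by []. Qed.

Lemma leq_fib m n : m <= n -> fib m <= fib n.
Proof.
move/subnK <-; elim: (n - m) => // k IH; apply: leq_trans IH _.
by rewrite addSn; case: (k + m) => // q; rewrite fibSS leq_addr.
Qed.

Lemma sum_fib N : \sum_(i < N) fib i + 1 = fib N.+1.
Proof.
elim: N => [|N IH]; first by rewrite big_ord0.
by rewrite big_ord_recr /= addnAC IH; case: N {IH}.
Qed.

Lemma sum_fib_lt (r : seq nat) N : uniq r -> (forall i, i \in r -> i < N) ->
  \sum_(i <- r) fib i < fib N.+1.
Proof.
move=> Ur Hr; rewrite -sum_fib -(big_mkord xpredT) addn1 ltnS.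
apply: sub_le_big_seq => [//|x y|i]; first exact: leq_addr.
rewrite count_uniq_mem // count_uniq_mem ?iota_uniq //.
by case Hi: (i \in r) => //; rewrite mem_iota add0n subn0 Hr.
Qed.

Local Open Scope ring_scope.

Lemma unit_dirP (d : int) : d \in [:: 1; -1] -> d = 1 \/ d = -1.
Proof. by rewrite !inE => /orP [] /eqP ->; [left | right]. Qed.

Lemma unit_dir_neq0 (d : int) : d \in [:: 1; -1] -> d != 0.
Proof. by case/unit_dirP => ->. Qed.

Lemma unit_dirN (d : int) : d \in [:: 1; -1] -> - d \in [:: 1; -1].
Proof. by case/unit_dirP => ->; rewrite ?opprK !inE eqxx ?orbT. Qed.

Lemma hopP s a d j t : hop s a d = Some (j, t) ->
  [/\ a \in s, a + d \in s, a + (d + d) \notin s, j = a + (d + d) &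
      t = j :: [seq b <- s | (b != a) && (b != a + d)]].
Proof. by rewrite /hop -mulr2n; case: ifP => // /and3P [? ? ?] [<- <-]. Qed.

Lemma hopE s a d : a \in s -> a + d \in s -> a + (d + d) \notin s ->
  hop s a d = Some (a + (d + d), a + (d + d) :: [seq b <- s | (b != a) && (b != a + d)]).
Proof. by rewrite /hop -mulr2n => -> -> ->. Qed.

Lemma hop_some s a d : a \in s -> a + d \in s -> a + (d + d) \notin s ->
  exists t, hop s a d = Some (a + (d + d), t).
Proof. by move=> Ha Had Hj; eexists; apply: hopE. Qed.

Lemma mem_hop s a d j t p : hop s a d = Some (j, t) ->
  (p \in t) = (p == j) || [&& p != a, p != a + d & p \in s].
Proof. by case/hopP=> _ _ _ _ ->; rewrite in_cons mem_filter andbA. Qed.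

Lemma uniq_hop s a d j t : uniq s -> hop s a d = Some (j, t) -> uniq t.
Proof.
move=> Us /hopP [_ _ Hj -> ->] /=.
by rewrite filter_uniq // andbT mem_filter (negPf Hj) andbF.
Qed.

Lemma size_hop s a d j t : d != 0 -> hop s a d = Some (j, t) -> (size t < size s)%N.
Proof.
move=> d0 /hopP [Ha Had _ _ ->] /=.
set keep := fun b => (b != a) && (b != a + d).
have Hne : a != a + d by rewrite eq_sym addrC -subr_eq0 addrK.
have Hdrop : (2 <= count (predC keep) s)%N.
  rewrite -size_filter; apply: (@uniq_leq_size _ [:: a; a + d]); first by rewrite /= andbT inE.
  move=> p; rewrite !inE => /orP [] /eqP ->; rewrite mem_filter /= /keep eqxx ?Ha ?Had ?andbF ?andbT //.
rewrite size_filter; change ((count keep s).+1 < size s)%N.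
by rewrite -(count_predC keep s) -addn1 ltn_add2l.
Qed.

Inductive hop_run : nat -> position -> int -> position -> Prop :=
| run1 s a d j t : d \in [:: 1; -1] -> hop s a d = Some (j, t) -> hop_run 1 s a t
| runS k s a d j s' t : d \in [:: 1; -1] -> hop s a d = Some (j, s') ->
    hop_run k s' j t -> hop_run k.+1 s a t.

Lemma run_gt0 k s a t : hop_run k s a t -> (0 < k)%N.
Proof. by case. Qed.

Lemma mem_run k s a t : hop_run k s a t -> a \in s.
Proof. by case=> [? ? ? ? ? _ /hopP [] | ? ? ? ? ? ? ? _ /hopP []]. Qed.

Lemma size_run k s a t : hop_run k s a t -> (size t + k <= size s)%N.
Proof.
elim=> {k s a t} [s a d j t Hd Hh | k s a d j s' t Hd Hh _ IH];
  have := size_hop (unit_dir_neq0 Hd) Hh; lia.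
Qed.

Lemma mem_hops_from s a p :
  reflect (exists2 d, d \in [:: 1; -1] & hop s a d = Some p) (p \in hops_from s a).
Proof.
rewrite /hops_from mem_pmap.
by apply: (iffP mapP) => -[d Hd E]; exists d.
Qed.

Lemma multi_fromP f s a t :
  t \in multi_from f s a <-> exists2 k, (k <= f)%N & hop_run k s a t.
Proof.
elim: f s a t => [|f IH] s a t /=.
  by split=> // -[k Hk /run_gt0]; rewrite ltnNge Hk.
split.
- case/flatten_mapP => -[j s'] /mem_hops_from [d Hd Hh]; rewrite inE => /orP [/eqP ->|].
  + by exists 1%N; [|apply: run1 Hd Hh].
  + by case/IH => k Hk Hrun; exists k.+1; [|apply: runS Hd Hh Hrun].
- case=> k Hk Hrun; case: Hrun Hk => [s0 a0 d j t0 Hd Hh _ | k0 s0 a0 d j s' t0 Hd Hh Hrun Hk].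
  + apply/flatten_mapP; exists (j, t0); first by apply/mem_hops_from; exists d.
    by rewrite inE eqxx.
  + apply/flatten_mapP; exists (j, s'); first by apply/mem_hops_from; exists d.
    by rewrite inE; apply/orP; right; apply/IH; exists k0.
Qed.

Lemma movesP multi s t :
  t \in moves multi s <-> exists a k, hop_run k s a t /\ (multi || (k == 1%N)).
Proof.
rewrite /moves; case: multi; split.
- by case/flatten_mapP => a _ /multi_fromP [k _ Hrun]; exists a, k.
- case=> a [k [Hrun _]]; apply/flatten_mapP; exists a; first by rewrite mem_undup (mem_run Hrun).
  apply/multi_fromP; exists k => //; have := size_run Hrun; lia.
- case/flatten_mapP => a _ /mapP [[j t'] /mem_hops_from [d Hd Hh] ->].
  by exists a, 1%N; split=> //; apply: run1 Hd Hh.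
- case=> a [k [Hrun Hk1]].
  apply/flatten_mapP; exists a; first by rewrite mem_undup (mem_run Hrun).
  case: Hrun Hk1 => [s0 a0 d j t0 Hd Hh _ | k0 ? ? ? ? ? ? _ _ /run_gt0]; last by case: k0.
  by apply/mapP; exists (j, t0) => //; apply/mem_hops_from; exists d.
Qed.

Lemma size_moves multi s t : t \in moves multi s -> (size t < size s)%N.
Proof.
case/movesP => a [k [Hrun _]]; apply: leq_trans (size_run Hrun).
by rewrite -addn1 leq_add2l (run_gt0 Hrun).
Qed.

Lemma bigD2_seq (T : eqType) (F : T -> nat) (s : seq T) x y :
  uniq s -> x \in s -> y \in s -> x != y ->
  (\sum_(p <- s) F p = F x + F y + \sum_(p <- [seq q <- s | (q != x) && (q != y)]) F p)%N.
Proof.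
move=> Us Hx Hy Hxy; set r := [seq q <- s | _].
have Hperm : perm_eq s [:: x, y & r].
  apply: uniq_perm => //=; first by rewrite !inE negb_or Hxy !mem_filter !eqxx andbF filter_uniq.
  move=> p; rewrite !inE mem_filter.
  by case: (eqVneq p x) => [->|_]; [rewrite Hx | case: (eqVneq p y) => [->|]].
by rewrite (perm_big _ Hperm) !big_cons; apply: addnA.
Qed.

Lemma mem_map_opp (s : position) p : (p \in map -%R s) = (- p \in s).
Proof. by rewrite -{1}(opprK p) (mem_map (@oppr_inj _)). Qed.

Lemma hop_opp s a d j t : hop s a d = Some (j, t) ->
  hop (map -%R s) (- a) (- d) = Some (- j, map -%R t).
Proof.
case/hopP => Ha Had Hj -> ->.
rewrite hopE ?mem_map_opp ?opprK -?opprD ?opprK //.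
rewrite /= filter_map; congr (Some (_, _ :: map _ _)); rewrite ?opprD //.
by apply: eq_filter => p /=; rewrite -opprD !eqr_opp.
Qed.

Lemma run_sim (P : position -> position -> Prop) (f : int -> int) :
  (forall s s' a d j t, P s s' -> f a \in s' -> d \in [:: 1; -1] ->
     hop s a d = Some (j, t) -> exists2 t', hop s' (f a) d = Some (f j, t') & P t t') ->
  forall k s s' a t, P s s' -> f a \in s' -> hop_run k s a t ->
  exists2 t', hop_run k s' (f a) t' & P t t'.
Proof.
move=> Hsim k s s' a t HP Ha Hrun; elim: Hrun s' HP Ha => {k s a t}.
- move=> s a d j t Hd Hh s' HP Ha; have [t' Hh' HP'] := Hsim _ _ _ _ _ _ HP Ha Hd Hh.
  by exists t' => //; apply: run1 Hd Hh'.
- move=> k s a d j s1 t Hd Hh _ IH s' HP Ha.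
  have [s1' Hh' HP1] := Hsim _ _ _ _ _ _ HP Ha Hd Hh.
  have Hj : f j \in s1' by rewrite (mem_hop _ Hh') eqxx.
  have [t' Hrun' HP'] := IH _ HP1 Hj.
  by exists t' => //; apply: runS Hd Hh' Hrun'.
Qed.

Lemma run_first_hop k s a t : hop_run k s a t ->
  exists d j t', d \in [:: 1; -1] /\ hop s a d = Some (j, t').
Proof. by case=> [? ? d j t' Hd Hh | ? ? ? d j t' ? Hd Hh _]; exists d, j, t'. Qed.

Lemma grundy_n_fuel multi n1 n2 s : (size s < n1)%N -> (size s < n2)%N ->
  grundy_n multi n1 s = grundy_n multi n2 s.
Proof.
elim: n1 n2 s => [|n1 IH] [|n2] s //= Hn1 Hn2.
congr mex; apply/eq_in_map => t /size_moves Ht.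
by apply: IH; apply: leq_trans Ht _.
Qed.

Lemma G_mex multi s : G multi s = mex [seq G multi t | t <- moves multi s].
Proof.
congr mex; apply/eq_in_map => t /size_moves Ht.
exact: grundy_n_fuel.
Qed.

Lemma grundy_sum_nE multi n s1 s2 : (size s1 + size s2 < n)%N ->
  grundy_sum_n multi n s1 s2 = Nat.lxor (G multi s1) (G multi s2).
Proof.
elim: n s1 s2 => [|n IH] s1 s2 //= Hn.
rewrite [G multi s1]G_mex [G multi s2]G_mex -mex_lxor -!map_comp -!G_mex.
rewrite ltnS in Hn; congr (mex (_ ++ _)); apply/eq_in_map => t /size_moves Ht /=;
  apply: IH; apply: leq_trans Hn; by rewrite ?ltn_add2r ?ltn_add2l.
Qed.

Section SumSimulation.
Variables (multi : bool) (R : position -> position -> position -> Prop).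

Hypothesis moves_split : forall s s1 s2 t, R s s1 s2 -> t \in moves multi s ->
  (exists2 t1, t1 \in moves multi s1 & R t t1 s2) \/
  (exists2 t2, t2 \in moves multi s2 & R t s1 t2).
Hypothesis moves_left : forall s s1 s2 t1, R s s1 s2 -> t1 \in moves multi s1 ->
  exists2 t, t \in moves multi s & R t t1 s2.
Hypothesis moves_right : forall s s1 s2 t2, R s s1 s2 -> t2 \in moves multi s2 ->
  exists2 t, t \in moves multi s & R t s1 t2.

Lemma grundy_n_sum_sim n s s1 s2 :
  R s s1 s2 -> grundy_n multi n s = grundy_sum_n multi n s1 s2.
Proof.
elim: n s s1 s2 => [|n IH] s s1 s2 Hs //=.
apply: eq_mex => v; rewrite mem_cat; apply/mapP/orP.
- case=> t /(moves_split Hs) [[t1 Ht1 Hr] | [t2 Ht2 Hr]] ->; [left | right];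
    apply/mapP; [exists t1 | exists t2] => //; exact: IH.
- case=> /mapP [u Hu ->].
  + by have [t Ht Hr] := moves_left Hs Hu; exists t => //; exact/esym/IH.
  + by have [t Ht Hr] := moves_right Hs Hu; exists t => //; exact/esym/IH.
Qed.

End SumSimulation.

(* [pagoda_weight] is a peg-solitaire pagoda function towards the target site
   [b + 1].  Each hop removes a peg and moves a peg by two sites, so the pegs
   of a position grown from [n] pegs at sites [>= lo] obey the lower bound in
   [confined]; [pagoda_depth] exceeds every distance it allows, which keeps the
   truncated subtraction in [pagoda_weight] exact. *)
Section Pagoda.
Variables (b lo : int) (n : nat).

Definition pagoda_depth : nat := (absz (b - lo) + 1 + 2 * n)%N.
Definition pagoda_weight (p : int) : nat := fib (pagoda_depth - absz (b + 1 - p)%R)%N.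
Definition pagoda (s : position) : nat := \sum_(p <- s) pagoda_weight p.

Definition confined (s : position) : Prop :=
  [/\ uniq s, (size s <= n)%N,
      forall p, p \in s -> (lo - Posz (2 * (n - size s))%N <= p) && (p <= b) &
      (pagoda s < fib pagoda_depth)%N].

Lemma pagoda_weight_target : pagoda_weight (b + 1) = fib pagoda_depth.
Proof. by rewrite /pagoda_weight subrr subn0. Qed.

Lemma pagoda_weight_hop p : lo - Posz (2 * n)%N <= p -> p + 1 <= b ->
  pagoda_weight (p + 2) = (pagoda_weight p + pagoda_weight (p + 1))%N.
Proof.
move=> Hlo Hb; rewrite /pagoda_weight /pagoda_depth.
set D := (absz (b - lo) + 1 + 2 * n)%N.
have -> : (D - absz (b + 1 - (p + 2))%R = (D - absz (b + 1 - p)%R).+2)%N by lia.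
have -> : (D - absz (b + 1 - (p + 1))%R = (D - absz (b + 1 - p)%R).+1)%N by lia.
by rewrite fibSS addnC.
Qed.

Lemma leq_pagoda_weight p q : q <= p -> p <= b + 1 ->
  (pagoda_weight q <= pagoda_weight p)%N.
Proof. move=> Hqp Hp; apply: leq_fib; lia. Qed.

Lemma confined_hop_bounds s a d j t : confined s -> d \in [:: 1; -1] ->
  hop s a d = Some (j, t) -> j <= b /\ (pagoda t <= pagoda s)%N.
Proof.
move=> [Us _ Hrange Hw] Hd Hh; have [Ha Had _ Ej Et] := hopP Hh.
have Hsum : pagoda s =
    (pagoda_weight a + pagoda_weight (a + d) + pagoda (behead t))%N.
  have Hne : a != a + d by rewrite eq_sym addrC -subr_eq0 addrK unit_dir_neq0.
  by rewrite /pagoda Et (bigD2_seq _ Us Ha Had Hne).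
have Ht : pagoda t = (pagoda_weight j + pagoda (behead t))%N by rewrite /pagoda Et big_cons.
move: (Hrange a Ha) (Hrange _ Had) => /andP [La Ua] /andP [Lad Uad].
have Hlo : lo - Posz (2 * n)%N <= a by lia.
case: (unit_dirP Hd) => Ed; subst d; last first.
  split; first lia.
  by rewrite Hsum Ht leq_add2r (leq_trans _ (leq_addr _ _)) // leq_pagoda_weight; lia.
have Hj : pagoda_weight j = (pagoda_weight a + pagoda_weight (a + 1))%N.
  by rewrite Ej (pagoda_weight_hop Hlo).
split; last by rewrite Hsum Ht Hj.
apply: contraTT Hw; rewrite -ltNge -leqNgt => Hjb.
by rewrite -pagoda_weight_target (_ : b + 1 = j) ?Hj ?Hsum ?leq_addr //; lia.
Qed.

Lemma confined_hop s a d j t : confined s -> d \in [:: 1; -1] ->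
  hop s a d = Some (j, t) -> confined t.
Proof.
move=> Hc Hd Hh; have [Hjb Hw] := confined_hop_bounds Hc Hd Hh.
case: Hc => Us Hsz Hrange Hws; have [Ha _ _ Ej _] := hopP Hh.
have Hlt := size_hop (unit_dir_neq0 Hd) Hh.
split.
- exact: uniq_hop Us Hh.
- exact: leq_trans (ltnW Hlt) Hsz.
- have /andP [La _] := Hrange a Ha.
  have Hja : a - 2 <= j by rewrite Ej; case: (unit_dirP Hd) => ->; lia.
  move=> p; rewrite (mem_hop _ Hh) => /orP [/eqP -> | /and3P [_ _ /Hrange /andP [Lp Up]]]; lia.
- exact: leq_ltn_trans Hw Hws.
Qed.

End Pagoda.

Lemma confined_init b lo s : uniq s -> (forall p, p \in s -> lo <= p < b) ->
  confined b lo (size s) s.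
Proof.
move=> Us Hs; split=> //.
- by move=> p /Hs /andP [Lp Up]; rewrite subnn muln0 subr0 Lp ltW.
- set D := pagoda_depth b lo (size s).
  have Hdist p : p \in s -> (2 <= absz (b + 1 - p)%R <= D)%N.
    by move=> /Hs /andP [Lp Up]; rewrite /D /pagoda_depth; lia.
  rewrite /pagoda -(big_map (fun p => D - absz (b + 1 - p)%R)%N xpredT fib).
  have -> : D = D.-1.+1 by rewrite /D /pagoda_depth; lia.
  apply: sum_fib_lt => [|i /mapP [p /Hdist Hp ->]]; last by lia.
  rewrite map_inj_in_uniq // => p q Hp Hq.
  by move: (Hdist p Hp) (Hdist q Hq) (Hs p Hp) (Hs q Hq); lia.
Qed.

(* The left part [s1] keeps its sites, all [<= b]; site [q] of the right part
   [s2] is site [q + offset] of [s], and [s2] is confined, after reflection,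
   to sites [>= 0].  The pegs of [(01)^m] are the spacers [b + 2], ...,
   [b + 2 m]; both neighbours of a spacer stay empty, so it never moves. *)
Section Separation.
Variables (b : int) (m : nat) (lo : int) (n1 n2 : nat).

Definition offset : int := b + 2 * m%:Z + 2.

Definition spacer (p : int) : bool :=
  [&& b + 2 <= p, p <= b + 2 * m%:Z & ~~ odd (absz (p - b))].

Definition separated (s s1 s2 : position) : Prop :=
  [/\ confined b 0 n1 s1, confined 0 lo n2 (map -%R s2) &
      forall p, (p \in s) = [|| p \in s1, spacer p | p - offset \in s2]].

Lemma separated_left_le s s1 s2 p : separated s s1 s2 -> p \in s1 -> p <= b.
Proof. by case=> [[_ _ Hrange _] _ _] /Hrange /andP []. Qed.

Lemma separated_right_ge0 s s1 s2 q : separated s s1 s2 -> q \in s2 -> 0 <= q.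
Proof.
case=> _ [_ _ Hrange _] _ Hq.
have /Hrange /andP [_] : - q \in map -%R s2 by rewrite mem_map_opp opprK.
by rewrite oppr_le0.
Qed.

Lemma separated_hop_left s s1 s2 a d j t t1 : separated s s1 s2 -> d \in [:: 1; -1] ->
  hop s a d = Some (j, t) -> hop s1 a d = Some (j, t1) -> separated t t1 s2.
Proof.
move=> Hsep Hd Hh Hh1; have [Ha Had _ _ _] := hopP Hh1.
case: (Hsep) => Hc1 Hc2 Hmem; split=> //; first exact: confined_hop Hc1 Hd Hh1.
move=> p; rewrite (mem_hop _ Hh) (mem_hop _ Hh1) Hmem.
have La := separated_left_le Hsep Ha; have Lad := separated_left_le Hsep Had.
case Hfar: (spacer p || (p - offset \in s2)).
- have [Hpa Hpad] : p != a /\ p != a + d.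
    case/orP: Hfar => [/and3P [Hk _ _] | /(separated_right_ge0 Hsep)];
      rewrite /offset; split; apply/eqP => Ep; lia.
  by rewrite Hpa Hpad /=; move: Hfar; case: (spacer p); case: (_ \in s2); rewrite ?orbT.
- by move: Hfar; case: (spacer p); case: (p - offset \in s2); rewrite /= ?orbF.
Qed.

Lemma separated_hop_right s s1 s2 a d j t t2 : separated s s1 s2 -> d \in [:: 1; -1] ->
  hop s a d = Some (j, t) -> hop s2 (a - offset) d = Some (j - offset, t2) ->
  separated t s1 t2.
Proof.
move=> Hsep Hd Hh Hh2; have [Ha Had _ _ _] := hopP Hh2.
case: (Hsep) => Hc1 Hc2 Hmem; split=> //.
  exact: confined_hop Hc2 (unit_dirN Hd) (hop_opp Hh2).
move=> p; rewrite (mem_hop _ Hh) (mem_hop _ Hh2) Hmem.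
have Ra := separated_right_ge0 Hsep Ha; have Rad := separated_right_ge0 Hsep Had.
have shiftE q : (p - offset == q - offset) = (p == q).
  by apply/eqP/eqP => [/addIr | ->].
rewrite shiftE shiftE (_ : a - offset + d = a + d - offset) ?shiftE; last by rewrite addrAC.
case Hnear: ((p \in s1) || spacer p).
- have [Hpa Hpad] : p != a /\ p != a + d.
    case/orP: Hnear => [/(separated_left_le Hsep) | /and3P [_ Hk _]];
      move: Ra Rad; rewrite /offset; split; apply/eqP => Ep; lia.
  by rewrite Hpa Hpad /=; move: Hnear; case: (p \in s1); case: (spacer p); rewrite ?orbT.
- by move: Hnear; case: (p \in s1); case: (spacer p).
Qed.

Lemma hop_left s s1 s2 a d j t : separated s s1 s2 -> a \in s1 -> d \in [:: 1; -1] ->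
  hop s a d = Some (j, t) -> exists2 t1, hop s1 a d = Some (j, t1) & separated t t1 s2.
Proof.
move=> Hsep Ha Hd Hh; have [_ Had Hj Ej _] := hopP Hh; case: (Hsep) => _ _ Hmem.
have La := separated_left_le Hsep Ha; have Ed := unit_dirP Hd.
have Had1 : a + d \in s1.
  move: Had; rewrite Hmem => /or3P [//| /and3P [Hk _ _] | /(separated_right_ge0 Hsep)];
    rewrite /offset; lia.
have Hj1 : a + (d + d) \notin s1 by apply: contra Hj; rewrite Hmem => ->.
have [t1 Hh1] := hop_some Ha Had1 Hj1; rewrite -Ej in Hh1.
by exists t1 => //; apply: separated_hop_left Hsep Hd Hh Hh1.
Qed.

Lemma hop_left_inv s s1 s2 a d j t1 : separated s s1 s2 -> d \in [:: 1; -1] ->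
  hop s1 a d = Some (j, t1) -> exists2 t, hop s a d = Some (j, t) & separated t t1 s2.
Proof.
move=> Hsep Hd Hh1; have [Ha Had Hj Ej _] := hopP Hh1; case: (Hsep) => Hc1 _ Hmem.
have [_ _ Hrange _] := confined_hop Hc1 Hd Hh1.
have /Hrange /andP [_ Ljb] : j \in t1 by rewrite (mem_hop _ Hh1) eqxx.
have Hjs : a + (d + d) \notin s.
  rewrite Hmem (negPf Hj) /=; apply/norP; split; apply/negP;
    [move=> /and3P [Hk _ _] | move=> /(separated_right_ge0 Hsep)]; rewrite /offset; lia.
have Has : a \in s by rewrite Hmem Ha.
have Hads : a + d \in s by rewrite Hmem Had.
have [t Hh] := hop_some Has Hads Hjs.
by rewrite -Ej in Hh; exists t => //; apply: separated_hop_left Hsep Hd Hh Hh1.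
Qed.

Lemma hop_right s s1 s2 a d j t : separated s s1 s2 -> a - offset \in s2 ->
  d \in [:: 1; -1] -> hop s a d = Some (j, t) ->
  exists2 t2, hop s2 (a - offset) d = Some (j - offset, t2) & separated t s1 t2.
Proof.
move=> Hsep Ha Hd Hh; have [_ Had Hj Ej _] := hopP Hh; case: (Hsep) => _ _ Hmem.
have Ra := separated_right_ge0 Hsep Ha; have Ed := unit_dirP Hd.
have Had2 : a - offset + d \in s2.
  move: Had; rewrite Hmem addrAC => /or3P [/(separated_left_le Hsep) | /and3P [_ Hk _] |//];
    move: Ra; rewrite /offset; lia.
have Hj2 : a - offset + (d + d) \notin s2.
  by apply: contra Hj; rewrite Hmem addrAC => ->; rewrite !orbT.
have [t2 Hh2] := hop_some Ha Had2 Hj2; rewrite addrAC -Ej in Hh2.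
by exists t2 => //; apply: separated_hop_right Hsep Hd Hh Hh2.
Qed.

Lemma hop_right_inv s s1 s2 a d j t2 : separated s s1 s2 -> d \in [:: 1; -1] ->
  hop s2 a d = Some (j, t2) ->
  exists2 t, hop s (a + offset) d = Some (j + offset, t) & separated t s1 t2.
Proof.
move=> Hsep Hd Hh2; have [Ha Had Hj Ej _] := hopP Hh2; case: (Hsep) => _ Hc2 Hmem.
have [_ _ Hrange _] := confined_hop Hc2 (unit_dirN Hd) (hop_opp Hh2).
have /Hrange /andP [_ Rj] : - j \in map -%R t2 by rewrite mem_map_opp opprK (mem_hop _ Hh2) eqxx.
have Has : a + offset \in s by rewrite Hmem addrK Ha !orbT.
have Hads : a + offset + d \in s by rewrite Hmem addrAC addrK Had !orbT.
have Hjs : a + offset + (d + d) \notin s.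
  rewrite Hmem addrAC addrK (negPf Hj) orbF; apply/norP; split; apply/negP;
    [move=> /(separated_left_le Hsep) | move=> /and3P [_ + _]]; move: Rj; rewrite /offset; lia.
have [t Hh] := hop_some Has Hads Hjs; rewrite addrAC -Ej in Hh.
exists t => //; apply: separated_hop_right Hsep Hd Hh _.
by rewrite !addrK.
Qed.

Lemma spacer_stuck s s1 s2 a d : separated s s1 s2 -> spacer a -> d \in [:: 1; -1] ->
  hop s a d = None.
Proof.
move=> Hsep Ha Hd; case Hh: (hop s a d) => [[j t]|] //.
have [_ Had _ _ _] := hopP Hh; case: (Hsep) => _ _ Hmem.
have /and3P [Hk1 Hk2 Hk] := Ha; have Ed := unit_dirP Hd.
move: Had; rewrite Hmem => /or3P
  [/(separated_left_le Hsep) | /and3P [_ _ Hk'] | /(separated_right_ge0 Hsep)];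
  rewrite /offset; lia.
Qed.

Lemma moves_split multi s s1 s2 t : separated s s1 s2 -> t \in moves multi s ->
  (exists2 t1, t1 \in moves multi s1 & separated t t1 s2) \/
  (exists2 t2, t2 \in moves multi s2 & separated t s1 t2).
Proof.
move=> Hsep /movesP [a [k [Hrun Hk]]].
have := mem_run Hrun; case: (Hsep) => _ _ -> /or3P [Ha | Ha | Ha].
- have [t1 Hrun1 Hsep1] :=
    run_sim (P := fun s s1 => separated s s1 s2) (f := id)
      (fun s s1 a d j t => @hop_left s s1 s2 a d j t) Hsep Ha Hrun.
  by left; exists t1 => //; apply/movesP; exists a, k.
- have [d [j [t' [Hd Hh]]]] := run_first_hop Hrun.
  by rewrite (spacer_stuck Hsep Ha Hd) in Hh.
- have [t2 Hrun2 Hsep2] :=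
    run_sim (P := fun s s2 => separated s s1 s2) (f := fun a => a - offset)
      (fun s s2 a d j t => @hop_right s s1 s2 a d j t) Hsep Ha Hrun.
  by right; exists t2 => //; apply/movesP; exists (a - offset), k.
Qed.

Lemma moves_left multi s s1 s2 t1 : separated s s1 s2 -> t1 \in moves multi s1 ->
  exists2 t, t \in moves multi s & separated t t1 s2.
Proof.
move=> Hsep /movesP [a [k [Hrun Hk]]].
have Ha : a \in s by case: (Hsep) => _ _ ->; rewrite (mem_run Hrun).
have [t Hrun' Hsep'] :=
  run_sim (P := fun s1 s => separated s s1 s2) (f := id)
    (fun s1 s a d j t1 Hsep _ => @hop_left_inv s s1 s2 a d j t1 Hsep) Hsep Ha Hrun.
by exists t => //; apply/movesP; exists a, k.
Qed.

Lemma moves_right multi s s1 s2 t2 : separated s s1 s2 -> t2 \in moves multi s2 ->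
  exists2 t, t \in moves multi s & separated t s1 t2.
Proof.
move=> Hsep /movesP [a [k [Hrun Hk]]].
have Ha : a + offset \in s by case: (Hsep) => _ _ ->; rewrite addrK (mem_run Hrun) !orbT.
have [t Hrun' Hsep'] :=
  run_sim (P := fun s2 s => separated s s1 s2) (f := fun a => a + offset)
    (fun s2 s a d j t2 Hsep _ => @hop_right_inv s s1 s2 a d j t2 Hsep) Hsep Ha Hrun.
by exists t => //; apply/movesP; exists (a + offset), k.
Qed.

Lemma grundy_n_separated multi n s s1 s2 :
  separated s s1 s2 -> grundy_n multi n s = grundy_sum_n multi n s1 s2.
Proof.
apply: grundy_n_sum_sim => s' s1' s2' t; [exact: moves_split | exact: moves_left | exact: moves_right].
Qed.

End Separation.

Lemma Posz_inj : injective Posz. Proof. by move=> m n []. Qed.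

Lemma mem_of_word w p :
  (p \in of_word w) = [&& 0 <= p, (absz p < size w)%N & nth false w (absz p)].
Proof.
case: p => [i|i] /=; last by apply/mapP => -[].
by rewrite /of_word (mem_map Posz_inj) mem_filter mem_iota add0n andbC.
Qed.

Lemma uniq_of_word w : uniq (of_word w).
Proof. by rewrite /of_word (map_inj_uniq Posz_inj) filter_uniq ?iota_uniq. Qed.

Lemma of_word_range w p : p \in of_word w -> 0 <= p < (size w)%:Z.
Proof. rewrite mem_of_word => /and3P [H0 Hs _]; lia. Qed.

Lemma mem_of_word_cat u v p :
  (p \in of_word (u ++ v)) = (p \in of_word u) || (p - (size u)%:Z \in of_word v).
Proof.
rewrite !mem_of_word size_cat nth_cat.
case: p => [i|i] /=; last by rewrite (_ : 0 <= _ = false) //; lia.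
have [Hi | Hi] := ltnP i (size u).
- by rewrite ltn_addr // (_ : 0 <= _ = false) ?orbF //; lia.
- rewrite (_ : absz (i%:Z - (size u)%:Z) = (i - size u)%N); last by lia.
  by rewrite (_ : 0 <= _ = true) ?ltn_subLR //; lia.
Qed.

Lemma mem_of_word_cons0 w p : (p \in of_word (false :: w)) = (p - 1 \in of_word w).
Proof. exact: (mem_of_word_cat [:: false]). Qed.

Lemma mem_of_word_spacers m q :
  (q \in of_word (flatten (nseq m [:: false; true]))) = [&& 0 <= q, q < 2 * m%:Z & odd (absz q)].
Proof.
elim: m q => [|m IH] q; first by rewrite /of_word /= in_nil; lia.
rewrite [flatten _]/= (mem_of_word_cat [:: false; true]) IH /of_word /= inE; lia.
Qed.

Lemma separated_split_word x y m :
  separated (size x)%:Z m (- (size y)%:Z)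
    (size (of_word (x ++ [:: false]))) (size (of_word (false :: y)))
    (of_word (split_word x y m)) (of_word (x ++ [:: false])) (of_word (false :: y)).
Proof.
set L := of_word (x ++ _); set R := of_word (false :: y); split.
- apply: confined_init; first exact: uniq_of_word.
  move=> p; rewrite mem_of_word_cat => /orP [/of_word_range | ]; first lia.
  by rewrite /of_word /= in_nil.
- rewrite -[size R](size_map -%R); apply: confined_init.
    by rewrite (map_inj_uniq oppr_inj) uniq_of_word.
  by move=> p; rewrite mem_map_opp mem_of_word_cons0 => /of_word_range; lia.
- move=> p; rewrite /split_word catA (mem_of_word_cat (x ++ _)) -/L.
  rewrite (mem_of_word_cat (flatten _)) mem_of_word_spacers /= !mem_of_word_cons0.
  rewrite size_cat size_flatten /shape map_nseq sumn_nseq /=.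
  rewrite (_ : _ - 1 - 1 = p - offset (size x) m - 1); last by rewrite /offset; lia.
  by rewrite (_ : [&& _, _ & _] = spacer (size x) m p) //; rewrite /spacer; lia.
Qed.

Theorem lemma1 (multi : bool) (x y : seq bool) (m : nat) :
  G multi (of_word (split_word x y m))
    = G_sum multi (of_word (x ++ [:: false])) (of_word (false :: y))
  /\
  G multi (of_word (split_word x y m))
    = nimsum (G multi (of_word (x ++ [:: false]))) (G multi (of_word (false :: y))).
Proof.
have Hsep := separated_split_word x y m.
set S := of_word (split_word x y m) in Hsep *.
set L := of_word (x ++ [:: false]) in Hsep *; set R := of_word (false :: y) in Hsep *.
have HG : G multi S = Nat.lxor (G multi L) (G multi R).
  rewrite /G (@grundy_n_fuel _ _ (size S + size L + size R).+1); try lia.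
  rewrite (grundy_n_separated _ _ Hsep) grundy_sum_nE //; lia.
by rewrite /G_sum grundy_sum_nE // HG.
Qed.
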